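(* Let $n\ge3$, $\kappa=\kappa_{12}\mathbf e_1\wedge\mathbf e_2$, so that the gyroscopic form is $\mathbf f=\frac{\kappa_{12}}{\varepsilon^2}d\gamma_1\wedge d\gamma_2$, and let the modified inertia operator be $\mathbf I(X\wedge Y)=\mathbb AX\wedge\mathbb AY$ with $\mathbb A=\operatorname{diag}(a_1,a_2,a_3,\dots,a_3)$, $a_i>0$. Let $\mathcal A(\gamma)=a_3+(a_1-a_3)\gamma_1^2+(a_2-a_3)\gamma_2^2$. Then $\mathcal N(\gamma)=\varepsilon\mathcal A(\gamma)^{\frac1{2\varepsilon}-1}$ is a Chaplygin multiplier: under the time substitution $d\tau=\mathcal N(\gamma)dt$ and the change of momenta $\tilde p=\mathcal N(\gamma)p$, the reduced system $$\dot\gamma=X_\gamma(\gamma,p),\qquad \dot p=\frac{1-\varepsilon}{\varepsilon^3}\mathbf I(\gamma\wedge X_\gamma)X_\gamma+\frac1{\varepsilon^2}\kappa X_\gamma+\mu\gamma$$ on $T^*S^{n-1}$ becomes the magnetic geodesic flow of the metric $$ds^2_{\mathbb A,\varepsilon}=(\gamma,\mathbb A\gamma)^{\frac1\varepsilon-2}\big((\mathbb Ad\gamma,d\gamma)(\mathbb A\gamma,\gamma)-(\mathbb A\gamma,d\gamma)^2\big)$$ on $S^{n-1}$ (Hamiltonian $h^*(\gamma,\tilde p)=\frac12\mathcal A(\gamma)^{1-\frac1\varepsilon}\langle\tilde p,\mathbb A^{-1}\tilde p\rangle$) with respect to the twisted symplectic form $$\Big(d\tilde p_1\wedge d\gamma_1+\dots+d\tilde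 p_n\wedge d\gamma_n+\frac{\kappa_{12}}{\varepsilon}\mathcal A(\gamma)^{\frac1{2\varepsilon}-1}d\gamma_1\wedge d\gamma_2\Big)\Big|_{T^*S^{n-1}}.$$
   Context: Model: balanced $n$-dimensional ball with gyroscope rolling without slipping and twisting over a fixed sphere; $\varepsilon=b/(b+a)$ or $b/(b-a)$ with $a,b>0$ the radii of the ball and the sphere. On $so(n)$, $\langle X,Y\rangle=-\frac12\operatorname{tr}(XY)$; on $\mathbb R^n$ the Euclidean product (also written $(\cdot,\cdot)$); $x\wedge y=xy^T-yx^T$; $\mathbf e_1,\dots,\mathbf e_n$ is the standard basis. $\mathbf I=\mathbb I+ma^2\mathrm{Id}$ is the modified inertia operator. $T^*S^{n-1}=\{(\gamma,p)\in\mathbb R^{2n}:\langle\gamma,\gamma\rangle=1,\langle\gamma,p\rangle=0\}$; $X_\gamma(\gamma,p)$ is the inverse of the Legendre map $\dot\gamma\mapsto p=-\frac1{\varepsilon^2}\mathbf I(\gamma\wedge\dot\gamma)\gamma$ on $TS^{n-1}$, $h=\frac12\langle X_\gamma,p\rangle$, and $\mu=\frac{\varepsilon-1}{\varepsilon^3}\langle\mathbf I(\gamma\wedge X_\gamma)X_\gamma,\gamma\rangle-2h+\frac1{\varepsilon^2}\langle X_\gamma,\kappa\gamma\rangle$. (Note $\mathcal A(\gamma)=\langle\mathbb A\gamma,\gamma\rangle$ on the unit sphere.) *)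

From HB Require Import structures.
From mathcomp Require Import all_boot all_order all_algebra.
From mathcomp Require Import all_classical all_reals all_analysis.
Set Implicit Arguments. Unset Strict Implicit. Unset Printing Implicit Defensive.
Import Order.TTheory GRing.Theory Num.Theory.
Import numFieldNormedType.Exports.
Local Open Scope ring_scope.
Local Open Scope classical_set_scope.

Section Defs.
Variable R : realType.
Variable n : nat.
Local Notation vec := 'cV[R]_n.

Definition dot (x y : vec) : R := \sum_(i < n) x i 0 * y i 0.

Definition wedge (x y : vec) : 'M[R]_n := x *m y^T - y *m x^T.

(* standard basis vector e_{k+1} (0-based index k). *)
Definition ebasis (k : nat) : vec := \col_(i < n) (if (i : nat) == k then 1 else 0).

Definition coord (x : vec) (k : nat) : R := dot x (ebasis k).

Definition diagA (a1 a2 a3 : R) : 'M[R]_n :=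
  \matrix_(i < n, j < n)
    (if i == j then (if (i : nat) == 0%N then a1 else if (i : nat) == 1%N then a2 else a3)
     else 0).

Definition Iw (A : 'M[R]_n) (x y : vec) : 'M[R]_n := wedge (A *m x) (A *m y).

Definition kappa (k12 : R) : 'M[R]_n := k12 *: wedge (ebasis 0) (ebasis 1).

Definition legendre (A : 'M[R]_n) (eps : R) (g v : vec) : vec :=
  - (eps ^+ 2)^-1 *: (Iw A g v *m g).

(* X_gamma(gamma, p): the inverse of the Legendre map on T S^{n-1}, i.e. the
   tangent vector v (with (gamma, v) = 0) mapped to p. *)
Definition Xg (A : 'M[R]_n) (eps : R) (g p : vec) : vec :=
  xget 0 [set v | dot g v = 0 /\ legendre A eps g v = p].

Definition hred (A : 'M[R]_n) (eps : R) (g p : vec) : R :=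
  2^-1 * dot (Xg A eps g p) p.

Definition mu (A : 'M[R]_n) (eps k12 : R) (g p : vec) : R :=
  let X := Xg A eps g p in
  (eps - 1) / eps ^+ 3 * dot (Iw A g X *m X) g - 2 * hred A eps g p
  + (eps ^+ 2)^-1 * dot X (kappa k12 *m g).

Definition pdot_red (A : 'M[R]_n) (eps k12 : R) (g p : vec) : vec :=
  let X := Xg A eps g p in
  ((1 - eps) / eps ^+ 3) *: (Iw A g X *m X) + (eps ^+ 2)^-1 *: (kappa k12 *m X)
  + mu A eps k12 g p *: g.

Definition TSn (g p : vec) : Prop := dot g g = 1 /\ dot g p = 0.

Definition tangentTS (g p : vec) (W : vec * vec) : Prop :=
  dot g W.1 = 0 /\ dot W.1 p + dot g W.2 = 0.

Definition calA (a1 a2 a3 : R) (g : vec) : R :=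
  a3 + (a1 - a3) * coord g 0 ^+ 2 + (a2 - a3) * coord g 1 ^+ 2.

Definition Nmult (a1 a2 a3 eps : R) (g : vec) : R :=
  eps * powR (calA a1 a2 a3 g) ((2 * eps)^-1 - 1).

Definition hstar (a1 a2 a3 eps : R) (x : vec * vec) : R :=
  2^-1 * powR (calA a1 a2 a3 x.1) (1 - eps^-1)
  * dot x.2 (invmx (diagA a1 a2 a3) *m x.2).

(* the twisted symplectic form
   sum_i dpt_i /\ dgamma_i + (k12/eps) calA^(1/(2eps)-1) dgamma_1 /\ dgamma_2
   at the point with position g, evaluated on V, W in R^{2n} = (dgamma, dpt). *)
Definition omega_tw (a1 a2 a3 eps k12 : R) (g : vec) (V W : vec * vec) : R :=
  (dot V.2 W.1 - dot V.1 W.2)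
  + k12 / eps * powR (calA a1 a2 a3 g) ((2 * eps)^-1 - 1)
    * (coord V.1 0 * coord W.1 1 - coord V.1 1 * coord W.1 0).

Definition is_hamVF (om : vec * vec -> vec * vec -> R) (H : vec * vec -> R)
  (x : vec * vec) (V : vec * vec) : Prop :=
  tangentTS x.1 x.2 V /\
  forall W, tangentTS x.1 x.2 W -> om V W = - ('D_W H x).

Definition metricAe (A : 'M[R]_n) (eps : R) (g v w : vec) : R :=
  powR (dot g (A *m g)) (eps^-1 - 2)
  * (dot (A *m v) w * dot (A *m g) g - dot (A *m g) v * dot (A *m g) w).

End Defs.

From Pilot Require Import Defs.
From HB Require Import structures.
From mathcomp Require Import all_boot all_order all_algebra.
From mathcomp Require Import all_classical all_reals all_analysis.
From mathcomp Require Import ring.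
Set Implicit Arguments. Unset Strict Implicit. Unset Printing Implicit Defensive.
Import Order.TTheory GRing.Theory Num.Theory.
Import numFieldNormedType.Exports.
Local Open Scope ring_scope.
Local Open Scope classical_set_scope.

(* On the unit sphere calA(g) = (A g, g) =: c, and the Legendre map of the
   reduced system can be inverted explicitly:
   X = eps^2 / c * (A^-1 p - (g, A^-1 p) g).  With u = c^(1/(2 eps) - 1) the
   multiplier is N = eps u, and the exponent of h^* satisfies
   c^(1 - 1/eps) = (u^2 c)^-1.  Substituting the equations of motion and the
   derivative of N along the flow, the condition i_V omega = - dh^* on vectors
   tangent to T^*S^{n-1} becomes a rational identity in u, c, eps and the inner
   products (A X, g), (A X, X), (A g, w), (A X, w).  For the metric, the
   Legendre image of v is c^(1/eps - 2) (c A v - (A g, v) A g), and the same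
   exponent relation gives h^* = ds^2(v, v) / 2. *)

(* [coord] is shadowed by vector.coord. *)
Local Notation coord := Defs.coord.

Section DotProduct.
Variables (R : realType) (n : nat).
Implicit Types x y z : 'cV[R]_n.

Lemma dotC x y : dot x y = dot y x.
Proof. by apply: eq_bigr => i _; rewrite mulrC. Qed.

Lemma dotDl x y z : dot (x + y) z = dot x z + dot y z.
Proof. by rewrite /dot -big_split; apply: eq_bigr => i _; rewrite !mxE mulrDl. Qed.

Lemma dotDr x y z : dot z (x + y) = dot z x + dot z y.
Proof. by rewrite dotC dotDl !(dotC z). Qed.

Lemma dotZl (k : R) x y : dot (k *: x) y = k * dot x y.
Proof. by rewrite /dot mulr_sumr; apply: eq_bigr => i _; rewrite !mxE mulrA. Qed.

Lemma dotZr (k : R) x y : dot y (k *: x) = k * dot y x.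
Proof. by rewrite dotC dotZl dotC. Qed.

Lemma dotBl x y z : dot (x - y) z = dot x z - dot y z.
Proof. by rewrite dotDl -scaleN1r dotZl mulN1r. Qed.

Lemma dotBr x y z : dot z (x - y) = dot z x - dot z y.
Proof. by rewrite !(dotC z) dotBl. Qed.

Lemma dot_mulmx (M : 'M[R]_n) x y : dot (M *m x) y = dot x (M^T *m y).
Proof.
rewrite /dot.
under eq_bigr do rewrite mxE mulr_suml.
under [RHS]eq_bigr do rewrite mxE mulr_sumr.
rewrite exchange_big /=; apply: eq_bigr => i _; apply: eq_bigr => j _.
by rewrite mxE; ring.
Qed.

Lemma dot_self_eq0 x : dot x x = 0 -> x = 0.
Proof.
move=> /eqP; rewrite /dot psumr_eq0 => [/allP x0|i _]; last first.
  by rewrite -expr2 sqr_ge0.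
apply/matrixP => i j; rewrite ord1 mxE.
by have := x0 i (mem_index_enum _); rewrite /= mulf_eq0 orbb => /eqP.
Qed.

Lemma trmx_mul_dot x y : y^T *m x = (dot y x)%:M.
Proof.
apply/matrixP => i j; rewrite !ord1 !mxE /dot /=.
by apply: eq_bigr => k _; rewrite mxE.
Qed.

Lemma wedge_mulmx x y z : wedge x y *m z = dot y z *: x - dot x z *: y.
Proof. by rewrite /wedge mulmxBl -!mulmxA !trmx_mul_dot !mul_mx_scalar. Qed.

Lemma ebasisE (k : nat) (i : 'I_n) : ebasis R n k i 0 = ((i : nat) == k)%:R.
Proof. by rewrite mxE; case: eqP. Qed.

Lemma coordE x (k : nat) (i : 'I_n) : (i : nat) = k -> coord x k = x i 0.
Proof.
move=> ik; rewrite /coord /dot (bigD1 i) //= big1 ?addr0.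
  by rewrite ebasisE ik eqxx mulr1.
move=> j ji; rewrite ebasisE; case: eqP => [jk|]; last by rewrite mulr0.
by case/eqP: ji; apply: val_inj; rewrite /= jk ik.
Qed.

Lemma coordD x y k : coord (x + y) k = coord x k + coord y k.
Proof. exact: dotDl. Qed.

Lemma coordZ (c : R) x k : coord (c *: x) k = c * coord x k.
Proof. exact: dotZl. Qed.

Lemma dot_ebasisl x k : dot (ebasis R n k) x = coord x k.
Proof. exact: dotC. Qed.

End DotProduct.

Section InertiaOperator.
Variables (R : realType) (n : nat) (A : 'M[R]_n) (eps : R).
Hypothesis symA : A^T = A.
Implicit Types g p v w x q : 'cV[R]_n.

Lemma dot_mulmx_sym x v : dot (A *m x) v = dot x (A *m v).
Proof. by rewrite dot_mulmx symA. Qed.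

Lemma dot_invmx_sym x v : dot (invmx A *m x) v = dot x (invmx A *m v).
Proof. by rewrite dot_mulmx trmx_inv symA. Qed.

Lemma legendreE g v : legendre A eps g v =
  - (eps ^+ 2)^-1 *: (dot (A *m v) g *: (A *m g) - dot (A *m g) g *: (A *m v)).
Proof. by rewrite /legendre /Iw wedge_mulmx. Qed.

Lemma dot_legendre g v w : dot (legendre A eps g v) w =
  - (eps ^+ 2)^-1 * (dot (A *m v) g * dot (A *m g) w - dot (A *m g) g * dot (A *m v) w).
Proof. by rewrite legendreE dotZl dotBl !dotZl. Qed.

Lemma invmx_legendre g v : A \in unitmx -> invmx A *m legendre A eps g v =
  - (eps ^+ 2)^-1 *: (dot (A *m v) g *: g - dot (A *m g) g *: v).
Proof. by move=> uA; rewrite legendreE -scalemxAr mulmxBr -!scalemxAr !mulKmx. Qed.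

Lemma XgP g p : A \in unitmx -> eps != 0 -> dot g g = 1 ->
    dot (A *m g) g != 0 -> dot g p = 0 ->
  dot g (Xg A eps g p) = 0 /\ legendre A eps g (Xg A eps g p) = p.
Proof.
move=> uA e0 gg c0 gp.
apply: (@xgetPex _ 0 [set v | dot g v = 0 /\ legendre A eps g v = p]).
set c := dot (A *m g) g in c0; set t := dot g (invmx A *m p).
exists ((eps ^+ 2 / c) *: (invmx A *m p - t *: g)); split.
  by rewrite dotZr dotBr dotZr gg -/t mulr1 subrr mulr0.
rewrite legendreE -scalemxAr mulmxBr -scalemxAr mulKVmx //.
rewrite dotZl dotBl dotZl (dotC p) gp -/c.
apply/matrixP => i j; rewrite !mxE.
by field; apply/andP.
Qed.

Lemma dot_pdot_red_self g p k12 : dot g g = 1 ->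
  dot g (pdot_red A eps k12 g p) = - dot (Xg A eps g p) p.
Proof.
move=> gg; set X := Xg A eps g p.
rewrite /pdot_red /mu /hred -/X !dotDr !dotZr gg (dotC (Iw A g X *m X) g).
rewrite /kappa -!scalemxAl !wedge_mulmx !dotZr !dotBr !dotZr !(dotC (ebasis R n _)).
rewrite [2 * (2^-1 * _)]mulrA divff ?pnatr_eq0 // mul1r; ring.
Qed.

Lemma dot_pdot_red_tangent g p k12 w (X := Xg A eps g p) : dot g w = 0 ->
  dot (pdot_red A eps k12 g p) w =
    (1 - eps) / eps ^+ 3
      * (dot (A *m X) X * dot (A *m g) w - dot (A *m g) X * dot (A *m X) w)
    + k12 / eps ^+ 2 * (coord X 1 * coord w 0 - coord X 0 * coord w 1).
Proof.
move=> gw; rewrite /pdot_red -/X !dotDl !dotZl gw mulr0 addr0.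
rewrite /Iw wedge_mulmx dotBl !dotZl.
rewrite /kappa -scalemxAl wedge_mulmx dotZl dotBl !dotZl !dot_ebasisl; ring.
Qed.

Lemma metric_dual_vector x v q : dot x q = 0 ->
    (forall w, dot x w = 0 -> dot q w = metricAe A eps x v w) ->
  q = powR (dot x (A *m x)) (eps^-1 - 2) *:
        (dot (A *m x) x *: (A *m v) - dot (A *m x) v *: (A *m x)).
Proof.
move=> xq qE; set k := powR _ _; set u := _ - _.
have ku w : metricAe A eps x v w = dot (k *: u) w.
  by rewrite /metricAe -/k dotZl dotBl !dotZl; ring.
have xu : dot x (k *: u) = 0.
  by rewrite dotZr dotBr !dotZr -!dot_mulmx_sym; ring.
apply/eqP; rewrite -subr_eq0; apply/eqP/dot_self_eq0.
have xw : dot x (q - k *: u) = 0 by rewrite dotBr xq xu subrr.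
by rewrite dotBl (qE _ xw) ku dotBr (dotC (k *: u) q) (qE _ xu) ku subrr.
Qed.

End InertiaOperator.

Section DiagonalMatrix.
Variables (R : realType) (n : nat).
Implicit Types x y : 'cV[R]_n.

Definition diagA_coef (a1 a2 a3 : R) (i : 'I_n) : R :=
  if (i : nat) == 0%N then a1 else if (i : nat) == 1%N then a2 else a3.

Lemma diagAE (a1 a2 a3 : R) i j :
  diagA n a1 a2 a3 i j = (i == j)%:R * diagA_coef a1 a2 a3 i.
Proof. by rewrite mxE; case: eqP; rewrite ?mul1r ?mul0r. Qed.

Lemma diagA_mulmx_col (a1 a2 a3 : R) x i :
  (diagA n a1 a2 a3 *m x) i 0 = diagA_coef a1 a2 a3 i * x i 0.
Proof.
rewrite mxE (bigD1 i) //= big1 ?addr0; first by rewrite diagAE eqxx mul1r.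
by move=> j /negbTE ji; rewrite diagAE eq_sym ji !mul0r.
Qed.

Lemma trmx_diagA (a1 a2 a3 : R) : (diagA n a1 a2 a3)^T = diagA n a1 a2 a3.
Proof.
by apply/matrixP => i j; rewrite mxE !diagAE eq_sym; case: eqP => [->|]; rewrite ?mul0r.
Qed.

Lemma mulmx_diagA (a1 a2 a3 b1 b2 b3 : R) :
  diagA n a1 a2 a3 *m diagA n b1 b2 b3 = diagA n (a1 * b1) (a2 * b2) (a3 * b3).
Proof.
apply/matrixP => i j; rewrite [in LHS]mxE.
rewrite (bigD1 i) //= big1 ?addr0 => [|k /negbTE ki]; last first.
  by rewrite diagAE eq_sym ki !mul0r.
rewrite !diagAE eqxx mul1r /diagA_coef.
by case: (i == j); rewrite ?mul0r ?mulr0 ?mul1r //; case: ifP => _ //; case: ifP.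
Qed.

Lemma diagA1 : diagA n 1 1 1 = 1%:M :> 'M[R]_n.
Proof.
apply/matrixP => i j; rewrite diagAE mxE /diagA_coef.
by case: (i == j); rewrite ?mul0r // mul1r; case: ifP => _ //; case: ifP.
Qed.

Lemma diagA_unit (a1 a2 a3 : R) : a1 != 0 -> a2 != 0 -> a3 != 0 ->
  diagA n a1 a2 a3 \in unitmx.
Proof.
move=> a10 a20 a30.
have AB : diagA n a1 a2 a3 *m diagA n a1^-1 a2^-1 a3^-1 = 1%:M.
  by rewrite mulmx_diagA !divff // diagA1.
by have [] := mulmx1_unit AB.
Qed.

Lemma diagA_mul_ebasis (a1 a2 a3 : R) x : diagA n a1 a2 a3 *m x =
  a3 *: x + ((a1 - a3) * coord x 0) *: ebasis R n 0
          + ((a2 - a3) * coord x 1) *: ebasis R n 1.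
Proof.
apply/matrixP => i j; rewrite !ord1 diagA_mulmx_col !mxE /diagA_coef.
case: eqP => [i0|_]; first by rewrite (coordE x i0) i0 /=; ring.
by case: eqP => [i1|_]; [rewrite (coordE x i1)|]; ring.
Qed.

Lemma dot_diagA (a1 a2 a3 : R) x y : dot (diagA n a1 a2 a3 *m x) y =
  a3 * dot x y + (a1 - a3) * coord x 0 * coord y 0 + (a2 - a3) * coord x 1 * coord y 1.
Proof. by rewrite diagA_mul_ebasis !dotDl !dotZl !dot_ebasisl; ring. Qed.

Lemma calA_dot (a1 a2 a3 : R) x :
  calA a1 a2 a3 x = dot (diagA n a1 a2 a3 *m x) x + a3 * (1 - dot x x).
Proof. by rewrite dot_diagA /calA /coord; ring. Qed.

Lemma dot_diagA_gt0 (a1 a2 a3 : R) x : 0 < a1 -> 0 < a2 -> 0 < a3 ->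
  0 < dot x x -> 0 < dot (diagA n a1 a2 a3 *m x) x.
Proof.
move=> a1gt0 a2gt0 a3gt0 xx; set m := Num.min a1 (Num.min a2 a3).
have m0 : 0 < m by rewrite !lt_min a1gt0 a2gt0 a3gt0.
apply: (lt_le_trans (mulr_gt0 m0 xx)).
rewrite /dot mulr_sumr; apply: ler_sum => i _; rewrite diagA_mulmx_col -mulrA.
apply: ler_wpM2r; first by rewrite -expr2 sqr_ge0.
rewrite /m /diagA_coef; case: ifP => _; first by rewrite ge_min lexx.
by case: ifP => _; rewrite !ge_min lexx ?orbT.
Qed.

End DiagonalMatrix.

Section Derivatives.
Variable R : realType.

Lemma derive_lineE (V W : normedModType R) (f : V -> W) (a v : V) :
  'D_v f a = 'D_1 (fun h : R => f (h *: v + a)) 0.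
Proof.
rewrite /derive; set g1 := fun h => h^-1 *: _; set g2 := fun h => h^-1 *: _.
suff -> : g1 = g2 by [].
by rewrite funeqE /g1 /g2 => h /=; rewrite addr0 scale0r add0r [_%:A]mulr1.
Qed.

Lemma is_derive_derive1 (V : normedModType R) (f : R -> V) (t : R) :
  derivable f t 1 -> is_derive t 1 f (f^`() t).
Proof. by move=> df; apply: DeriveDef df (esym (derive1E f t)). Qed.

Lemma is_derive_mx_entry m k (F : R -> 'M[R]_(m, k)) (t : R) dF i j :
  is_derive t 1 F dF -> is_derive t 1 (fun s => F s i j) (dF i j).
Proof.
case=> dFt <-; apply: DeriveDef; first exact: (derivable_mxP F t 1).1.
by rewrite derive_mx // mxE.
Qed.

Lemma is_derive_scalemx m k (f : R -> R) (F : R -> 'M[R]_(m, k)) (t df : R) dF :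
  is_derive t 1 f df -> is_derive t 1 F dF ->
  is_derive t 1 (fun s => f s *: F s) (f t *: dF + df *: F t).
Proof.
move=> fd Fd.
have entry i j :
    is_derive t 1 (fun s => (f s *: F s) i j) ((f t *: dF + df *: F t) i j).
  have -> : (fun s => (f s *: F s) i j) = (fun s => f s * F s i j).
    by apply: funext => s; rewrite mxE.
  apply: (is_derive_eq (is_deriveM fd (is_derive_mx_entry i j Fd))).
  by rewrite !mxE (mulrC df).
have dFt : derivable (fun s => f s *: F s) t 1.
  by apply/derivable_mxP => i j; case: (entry i j).
apply: DeriveDef => //; rewrite derive_mx //.
by apply/matrixP => i j; rewrite mxE; case: (entry i j).
Qed.

Variable n : nat.
Implicit Types x w : 'cV[R]_n.

Lemma is_derive_coord (F : R -> 'cV[R]_n) (t : R) dF k : (k < n)%N ->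
  is_derive t 1 F dF -> is_derive t 1 (fun s => coord (F s) k) (coord dF k).
Proof.
move=> kn Fd; rewrite (coordE dF (i := Ordinal kn)) //.
have -> : (fun s => coord (F s) k) = (fun s => F s (Ordinal kn) 0).
  by apply: funext => s; apply: coordE.
exact: is_derive_mx_entry.
Qed.

Lemma is_derive_coord_line w x k :
  is_derive (0 : R) 1 (fun h : R => coord (h *: w + x) k) (coord w k).
Proof.
have -> : (fun h : R => coord (h *: w + x) k) = (fun h => h * coord w k + coord x k).
  by apply: funext => h; rewrite coordD coordZ.
by apply: is_derive_eq; rewrite -![_ *: _]/(_ * _); ring.
Qed.

Lemma is_derive_quadratic_line w x (M : 'M[R]_n) :
  is_derive (0 : R) 1 (fun h : R => dot (h *: w + x) (M *m (h *: w + x)))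
    (dot w (M *m x) + dot x (M *m w)).
Proof.
have -> : (fun h : R => dot (h *: w + x) (M *m (h *: w + x))) =
    (fun h => h * (h * dot w (M *m w)) + h * (dot w (M *m x) + dot x (M *m w))
              + dot x (M *m x)).
  apply: funext => h; rewrite mulmxDr -scalemxAr !dotDl !dotDr !dotZl !dotZr; ring.
by apply: is_derive_eq; rewrite -![_ *: _]/(_ * _); ring.
Qed.

End Derivatives.

Lemma powR_subr1 (R : realType) (c x : R) : 0 < c -> powR c (x - 1) = powR c x / c.
Proof. by move=> c0; rewrite powRB ?(gt_eqF c0) ?implybT // powRr1 // ltW. Qed.

Section ChaplyginMultiplier.
Variables (R : realType) (n : nat) (a1 a2 a3 eps k12 : R).
Hypotheses (a1gt0 : 0 < a1) (a2gt0 : 0 < a2) (a3gt0 : 0 < a3) (eps_neq0 : eps != 0).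
Local Notation A := (diagA n a1 a2 a3).
Local Notation calA := (calA a1 a2 a3).
Local Notation N := (Nmult a1 a2 a3 eps).
Local Notation hstar := (hstar a1 a2 a3 eps).
Implicit Types g p q v w x : 'cV[R]_n.

Let symA : A^T = A. Proof. exact: trmx_diagA. Qed.
Let unitA : A \in unitmx. Proof. by apply: diagA_unit; apply: lt0r_neq0. Qed.

Definition dcalA g v : R := 2 * (dot (A *m g) v - a3 * dot g v).

Definition dNmult g v : R :=
  eps * (((2 * eps)^-1 - 1) * powR (calA g) ((2 * eps)^-1 - 1 - 1) * dcalA g v).

Lemma calA_sphere g : dot g g = 1 -> calA g = dot (A *m g) g.
Proof. by move=> gg; rewrite calA_dot gg subrr mulr0 addr0. Qed.

Lemma calA_gt0 g : dot g g = 1 -> 0 < calA g.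
Proof. by move=> gg; rewrite calA_sphere // dot_diagA_gt0 // gg ltr01. Qed.

Lemma powR_exponent_hstar c :
  0 < c -> powR c (1 - eps^-1) = (powR c (eps^-1 - 2) * c)^-1.
Proof.
move=> c0; have -> : 1 - eps^-1 = - ((eps^-1 - 2) + 1) by ring.
by rewrite powRN powRD ?(gt_eqF c0) ?implybT // powRr1 // ltW.
Qed.

Lemma powR_exponent_Nmult c :
  0 < c -> powR c ((2 * eps)^-1 - 1) ^+ 2 = powR c (eps^-1 - 2).
Proof.
move=> c0; rewrite expr2 -powRD ?(gt_eqF c0) ?implybT //.
by congr powR; rewrite invfM; field.
Qed.

Lemma is_derive_calA (F : R -> 'cV[R]_n) (t : R) v :
  is_derive t 1 (fun s => coord (F s) 0) (coord v 0) ->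
  is_derive t 1 (fun s => coord (F s) 1) (coord v 1) ->
  is_derive t 1 (fun s => calA (F s)) (dcalA (F t) v).
Proof.
move=> d0 d1; rewrite /Defs.calA; apply: is_derive_eq.
by rewrite /dcalA dot_diagA -![_ *: _]/(_ * _); ring.
Qed.

Lemma is_derive_Nmult (F : R -> 'cV[R]_n) (t : R) v : 0 < calA (F t) ->
  is_derive t 1 (fun s => coord (F s) 0) (coord v 0) ->
  is_derive t 1 (fun s => coord (F s) 1) (coord v 1) ->
  is_derive t 1 (fun s => N (F s)) (dNmult (F t) v).
Proof.
move=> c0 d0 d1.
have dP := is_derive1_comp (g := fun s => calA (F s))
  (is_derive1_powR ((2 * eps)^-1 - 1) c0) (is_derive_calA d0 d1).
have -> : (fun s => N (F s)) =
    eps *: ((@powR R)^~ ((2 * eps)^-1 - 1) \o (fun s => calA (F s))) by [].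
exact: is_deriveZ.
Qed.

Lemma is_derive_rescaled_momentum (g p : R -> 'cV[R]_n) (t : R) dg dp :
  (1 < n)%N -> dot (g t) (g t) = 1 -> is_derive t 1 g dg -> is_derive t 1 p dp ->
  is_derive t 1 (fun s => N (g s) *: p s) (N (g t) *: dp + dNmult (g t) dg *: p t).
Proof.
move=> n1 gg gd pd; apply: is_derive_scalemx pd.
apply: is_derive_Nmult; first exact: calA_gt0.
  exact: is_derive_coord (ltnW n1) gd.
exact: is_derive_coord n1 gd.
Qed.

Lemma derive_hstar g q (W : 'cV[R]_n * 'cV[R]_n) : 0 < calA g ->
  'D_W hstar (g, q) = powR (calA g) (1 - eps^-1) * dot W.2 (invmx A *m q)
    + 2^-1 * ((1 - eps^-1) * powR (calA g) (1 - eps^-1 - 1) * dcalA g W.1)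
      * dot q (invmx A *m q).
Proof.
move=> c0; rewrite derive_lineE.
have -> : (fun h : R => hstar (h *: W + (g, q))) = (fun h => 2^-1
    * powR (calA (h *: W.1 + g)) (1 - eps^-1)
    * dot (h *: W.2 + q) (invmx A *m (h *: W.2 + q))) by [].
have dC := is_derive_calA (is_derive_coord_line W.1 g 0) (is_derive_coord_line W.1 g 1).
rewrite scale0r add0r in dC.
have c0' : 0 < calA (0 *: W.1 + g) by rewrite scale0r add0r.
have dP := is_derive1_comp (g := fun h => calA (h *: W.1 + g))
  (is_derive1_powR (1 - eps^-1) c0') dC.
have dQ := is_derive_quadratic_line W.2 q (invmx A).
have [_ ->] := is_deriveM (is_deriveZ 2^-1 dP) dQ.
rewrite /= !scale0r !add0r (dotC q) (dot_invmx_sym symA) -![_ *: _]/(_ * _).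
by set e := 1 - eps^-1; field.
Qed.

Lemma omega_rescaled_flow g p (W : 'cV[R]_n * 'cV[R]_n) (X := Xg A eps g p) :
    dot g g = 1 -> dot g p = 0 -> tangentTS g (N g *: p) W ->
  omega_tw a1 a2 a3 eps k12 g
    ((N g)^-1 *: X, (N g)^-1 *: (N g *: pdot_red A eps k12 g p + dNmult g X *: p)) W
  = - 'D_W hstar (g, N g *: p).
Proof.
case: W => w1 w2 gg gp [/= gw1 tangent].
have c0 := calA_gt0 gg; have cE := calA_sphere gg.
have [gX LX] : dot g X = 0 /\ legendre A eps g X = p.
  by apply: XgP => //; rewrite -cE gt_eqF.
rewrite derive_hstar // /dNmult -/X.
set c := calA g in c0 cE *; set u := powR c ((2 * eps)^-1 - 1).
have u0 : u != 0 by rewrite gt_eqF ?powR_gt0.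
have NE : N g = eps * u by [].
rewrite NE in tangent *.
rewrite (powR_subr1 ((2 * eps)^-1 - 1)) // (powR_subr1 (1 - eps^-1)) //.
rewrite powR_exponent_hstar // -powR_exponent_Nmult // -/u.
set s := dot (A *m X) g; set K := dot (A *m X) X.
set Y := dot (A *m X) w1; set Z := dot (A *m g) w1.
have sE : dot (A *m g) X = s by rewrite (dot_mulmx_sym symA) dotC.
have pw1 : dot p w1 = - (eps ^+ 2)^-1 * (s * Z - c * Y).
  by rewrite -LX dot_legendre -cE.
have pX : dot p X = - (eps ^+ 2)^-1 * (s * s - c * K).
  by rewrite -LX dot_legendre -cE sE.
have Bp : invmx A *m p = - (eps ^+ 2)^-1 *: (s *: g - c *: X).
  by rewrite -{1}LX invmx_legendre // -cE.
have w2g : dot w2 g = - (eps * u) * dot p w1.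
  by move/eqP: tangent; rewrite addrC addr_eq0 dotZr (dotC w1) (dotC g) mulNr => /eqP.
rewrite /omega_tw /= -/c -/u !coordZ !dotZl !dotDl !dotZl.
rewrite (dot_pdot_red_tangent A eps p k12 gw1) -/X -/s -/K -/Y -/Z sE.
rewrite -scalemxAr Bp !dotZr !dotBr !dotZr (dotC p g) gp w2g pw1 pX.
rewrite /dcalA -/Z sE gX gw1 (dotC w2 X) !mulr0 !subr0.
by field; rewrite u0 (gt_eqF c0) eps_neq0.
Qed.

Lemma hamVF_rescaled g p (X := Xg A eps g p) : dot g g = 1 -> dot g p = 0 ->
  is_hamVF (omega_tw a1 a2 a3 eps k12 g) hstar (g, N g *: p)
    ((N g)^-1 *: X, (N g)^-1 *: (N g *: pdot_red A eps k12 g p + dNmult g X *: p)).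
Proof.
move=> gg gp; split=> [|W]; last exact: omega_rescaled_flow.
have [gX _] : dot g X = 0 /\ legendre A eps g X = p.
  by apply: XgP => //; rewrite -calA_sphere // gt_eqF ?calA_gt0.
split=> /=; first by rewrite dotZr gX mulr0.
by rewrite !dotZl !dotZr dotDr !dotZr dot_pdot_red_self // gp; ring.
Qed.

Lemma hstar_metric x v q : dot x x = 1 -> dot x q = 0 ->
    (forall w, dot x w = 0 -> dot q w = metricAe A eps x v w) ->
  hstar (x, q) = 2^-1 * metricAe A eps x v v.
Proof.
move=> xx xq qE; have c0 := calA_gt0 xx; have cE := calA_sphere xx.
rewrite (metric_dual_vector symA xq qE) /Defs.hstar /metricAe /= -/(calA x).
rewrite cE in c0 *.
rewrite (dotC x (A *m x)) powR_exponent_hstar //.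
set c := dot (A *m x) x; set k := powR c _; set r := dot (A *m x) v.
have k0 : k != 0 by rewrite gt_eqF ?powR_gt0.
rewrite -scalemxAr mulmxBr -!scalemxAr !mulKmx // !dotZl !dotZr !dotBl !dotBr.
rewrite !dotZl !dotZr (dotC (A *m v) x) -(dot_mulmx_sym symA) -/r -/c.
by field; rewrite k0 (gt_eqF c0).
Qed.

End ChaplyginMultiplier.

Lemma rolling_ratio_neq0 (R : realType) (a b eps : R) : 0 < a -> 0 < b ->
  eps = b / (b + a) \/ (b != a /\ eps = b / (b - a)) -> eps != 0.
Proof.
move=> a0 b0 [->|[ba ->]]; apply: mulf_neq0; rewrite ?invr_eq0 ?(gt_eqF b0) //.
  by rewrite gt_eqF // addr_gt0.
by rewrite subr_eq0.
Qed.

Unset Implicit Arguments. Set Strict Implicit.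

Theorem theorem8p2 (R : realType) (n : nat) (a b eps k12 a1 a2 a3 : R)
  (D : set R) (g p : R -> 'cV[R]_n) :
  (3 <= n)%N ->
  0 < a -> 0 < b ->
  (eps = b / (b + a) \/ (b != a /\ eps = b / (b - a))) ->
  0 < a1 -> 0 < a2 -> 0 < a3 ->
  open D ->
  (* (g, p) is a solution of the reduced system on T^*S^{n-1}, for t in D *)
  (forall t, D t ->
     TSn (g t) (p t) /\
     derivable g t 1 /\ derivable p t 1 /\
     derive1 g t = Xg (diagA n a1 a2 a3) eps (g t) (p t) /\
     derive1 p t = pdot_red (diagA n a1 a2 a3) eps k12 (g t) (p t)) ->
  let N := Nmult a1 a2 a3 eps in
  let pt := fun t => N (g t) *: p t in
  (* with d tau = N dt (i.e. d/d tau = N^{-1} d/dt) and pt = N p, the curve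
     (g, pt) is an integral curve of the Hamiltonian vector field of h^* for
     the twisted symplectic form restricted to T^*S^{n-1} *)
  (forall t, D t ->
     TSn (g t) (pt t) /\ derivable pt t 1 /\
     is_hamVF (omega_tw a1 a2 a3 eps k12 (g t)) (hstar a1 a2 a3 eps)
       (g t, pt t) ((N (g t))^-1 *: derive1 g t, (N (g t))^-1 *: derive1 pt t))
  /\
  (* h^* is the Hamiltonian of the metric ds^2_{A,eps} on S^{n-1}: for a tangent
     vector v at gamma and its Legendre image pt (w.r.t. ds^2), h^* = ds^2(v,v)/2 *)
  (forall (x v q : 'cV[R]_n),
     dot x x = 1 -> dot x v = 0 -> dot x q = 0 ->
     (forall w, dot x w = 0 -> dot q w = metricAe (diagA n a1 a2 a3) eps x v w) ->
     hstar a1 a2 a3 eps (x, q) = 2^-1 * metricAe (diagA n a1 a2 a3) eps x v v).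
Proof.
move=> n3 a0 b0 eps_ratio a1gt0 a2gt0 a3gt0 _ solution N pt.
split=> [t Dt|x v q xx _ xq]; last exact: hstar_metric.
have [[gg gp] [dg [dp [gE pE]]]] := solution t Dt.
have n1 : (1 < n)%N by apply: leq_trans n3.
have := is_derive_rescaled_momentum eps a1gt0 a2gt0 a3gt0 n1 gg
  (is_derive_derive1 dg) (is_derive_derive1 dp).
rewrite -/N -/pt => dpt.
split; first by split; rewrite // dotZr gp mulr0.
split; first exact: ex_derive.
rewrite gE derive1E; case: dpt => _ ->; rewrite pE gE.
have eps0 := rolling_ratio_neq0 a0 b0 eps_ratio.
exact (hamVF_rescaled k12 a1gt0 a2gt0 a3gt0 eps0 gg gp).
Qed.
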